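(* Let $A$ and $B$ be $2\times 2$ matrices with strictly positive entries. Then \[ R(AB)\le \Phi\bigl(R(A),R(B)\bigr)=\left(\frac{1+\sqrt{R(A)R(B)}}{\sqrt{R(A)}+\sqrt{R(B)}}\right)^{2}. \]
   Context: For a $2\times2$ matrix $A=(a_{ij})$ with strictly positive entries, the oriented distortion is $F(A)=\frac{a_{11}a_{22}}{a_{12}a_{21}}$ and the distortion is $R(A)=\max\{F(A),1/F(A)\}$ (so $R(A)\ge 1$). The envelope function is $\Phi(\alpha,\beta)=\left(\frac{1+\sqrt{\alpha\beta}}{\sqrt{\alpha}+\sqrt{\beta}}\right)^2$ for $\alpha,\beta\ge 1$. *)

From mathcomp Require Import all_boot all_order all_algebra.
Set Implicit Arguments. Unset Strict Implicit. Unset Printing Implicit Defensive.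
Import Order.TTheory GRing.Theory Num.Theory.
Local Open Scope ring_scope.

Definition pos_mx (R : realFieldType) (A : 'M[R]_2) : Prop :=
  forall i j : 'I_2, 0 < A i j.

Definition odist (R : realFieldType) (A : 'M[R]_2) : R :=
  (A 0 0 * A 1 1) / (A 0 1 * A 1 0).

Definition dist (R : realFieldType) (A : 'M[R]_2) : R :=
  Num.max (odist A) (odist A)^-1.

Definition Phi (R : rcfType) (a b : R) : R :=
  ((1 + Num.sqrt (a * b)) / (Num.sqrt a + Num.sqrt b)) ^+ 2.

(* Writing t = a12 b21 / (a11 b11), the oriented distortion of AB depends only on
   u = F(A), v = F(B) and t, through
   F(AB) = (1 + t)(1 + u v t) / ((1 + u t)(1 + v t)).
   Let a, b >= 1 with u = a^(+-2), v = b^(+-2). The substitution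
   (u, v, t) -> (1/u, 1/v, u v t) leaves this expression unchanged, so u = a^2 may be
   assumed; in both remaining cases ((1 + a b) / (a + b))^2 minus the expression is an
   explicit sum of nonnegative terms. Finally 1/F(AB) is the oriented distortion of A
   times B with its columns swapped, which has the same distortion as B. *)
From mathcomp Require Import all_boot all_order all_algebra.
From mathcomp Require Import perm ring.
Set Implicit Arguments. Unset Strict Implicit. Unset Printing Implicit Defensive.
Import Order.TTheory GRing.Theory Num.Theory.
Local Open Scope ring_scope.

Section DistortionLaw.
Variable R : realFieldType.

Definition odist_law (u v t : R) : R :=
  (1 + t) * (1 + u * v * t) / ((1 + u * t) * (1 + v * t)).

Lemma odist_lawV (u v t : R) : u != 0 -> v != 0 ->
  odist_law u v t = odist_law u^-1 v^-1 (u * v * t).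
Proof.
move=> u0 v0; rewrite /odist_law.
have -> : u^-1 * v^-1 * (u * v * t) = t by field; rewrite ?u0 ?v0.
have -> : u^-1 * (u * v * t) = v * t by field; rewrite ?u0 ?v0.
have -> : v^-1 * (u * v * t) = u * t by field; rewrite ?u0 ?v0.
by rewrite [(1 + t) * _]mulrC [(1 + u * t) * _]mulrC.
Qed.

Section Envelope.
Variables a b t : R.
Hypotheses (a_ge1 : 1 <= a) (b_ge1 : 1 <= b) (t_gt0 : 0 < t).

Let a2_ge1 : 0 <= a ^+ 2 - 1. Proof. by rewrite subr_ge0 exprn_ege1. Qed.
Let b2_ge1 : 0 <= b ^+ 2 - 1. Proof. by rewrite subr_ge0 exprn_ege1. Qed.
Let a_gt0 : 0 < a. Proof. exact: lt_le_trans a_ge1. Qed.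
Let b_gt0 : 0 < b. Proof. exact: lt_le_trans b_ge1. Qed.
Let a2_gt0 : 0 < a ^+ 2. Proof. exact: exprn_gt0. Qed.
Let b2_gt0 : 0 < b ^+ 2. Proof. exact: exprn_gt0. Qed.
Let ab_gt0 : 0 < a + b. Proof. exact: addr_gt0. Qed.
Let shift_gt0 (x : R) : 0 < x -> 0 < 1 + x * t.
Proof. by move=> x0; rewrite ltr_pwDl // mulr_ge0 // ltW. Qed.

Lemma odist_law_sqr_le :
  odist_law (a ^+ 2) (b ^+ 2) t <= ((1 + a * b) / (a + b)) ^+ 2.
Proof.
rewrite -subr_ge0.
have -> : ((1 + a * b) / (a + b)) ^+ 2 - odist_law (a ^+ 2) (b ^+ 2) t =
    (a ^+ 2 - 1) * (b ^+ 2 - 1) * (a * b * t - 1) ^+ 2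
    / ((a + b) ^+ 2 * (1 + a ^+ 2 * t) * (1 + b ^+ 2 * t)).
  rewrite /odist_law; field.
  by rewrite !gt_eqF ?shift_gt0.
apply: divr_ge0; first by rewrite mulr_ge0 ?sqr_ge0 // mulr_ge0.
by rewrite !mulr_ge0 // ltW ?shift_gt0.
Qed.

Lemma odist_law_sqr_inv_le :
  odist_law (a ^+ 2) (b ^- 2) t <= ((1 + a * b) / (a + b)) ^+ 2.
Proof.
rewrite -subr_ge0.
have bt_gt0 : 0 < b ^+ 2 + t by rewrite addr_gt0.
have -> : ((1 + a * b) / (a + b)) ^+ 2 - odist_law (a ^+ 2) (b ^- 2) t =
    (a ^+ 2 - 1) * (b ^+ 2 - 1) / (a + b) ^+ 2
    + t * (a ^+ 2 - 1) * (b ^+ 2 - 1) / ((1 + a ^+ 2 * t) * (b ^+ 2 + t)).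
  rewrite /odist_law; field.
  have bVt_gt0 : 0 < 1 + b ^- 2 * t by rewrite shift_gt0 ?invr_gt0.
  by rewrite !gt_eqF ?shift_gt0.
by rewrite addr_ge0 // divr_ge0 ?sqr_ge0 ?mulr_ge0 // ltW ?shift_gt0.
Qed.

End Envelope.

Lemma odist_law_le_envelope (a b u v t : R) : 1 <= a -> 1 <= b -> 0 < t ->
  u = a ^+ 2 \/ u = a ^- 2 -> v = b ^+ 2 \/ v = b ^- 2 ->
  odist_law u v t <= ((1 + a * b) / (a + b)) ^+ 2.
Proof.
move=> a_ge1 b_ge1 t_gt0 hu hv.
have base w s : 0 < s -> w = b ^+ 2 \/ w = b ^- 2 ->
    odist_law (a ^+ 2) w s <= ((1 + a * b) / (a + b)) ^+ 2.
  by move=> s_gt0 [] ->; [exact: odist_law_sqr_le | exact: odist_law_sqr_inv_le].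
case: hu => [->|->]; first exact: base.
have a2_gt0 : 0 < a ^+ 2 by rewrite exprn_gt0 // (lt_le_trans ltr01).
have v_gt0 : 0 < v.
  by case: hv => ->; rewrite ?invr_gt0 exprn_gt0 // (lt_le_trans ltr01).
rewrite odist_lawV ?gt_eqF ?invr_gt0 // invrK; apply: base.
  by rewrite !mulr_gt0 ?invr_gt0.
by case: hv => ->; rewrite ?invrK; [right | left].
Qed.

End DistortionLaw.

Lemma sqrt_max_inv (R : rcfType) (u : R) : 0 < u ->
  let a := Num.sqrt (Num.max u u^-1) in 1 <= a /\ (u = a ^+ 2 \/ u = a ^- 2).
Proof.
move=> u_gt0 a.
have max_ge1 : 1 <= Num.max u u^-1.
  rewrite le_max; case: (leP 1 u) => // u_lt1.
  by rewrite invr_ge1 ?unitfE ?gt_eqF // ltW.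
have max_ge0 : 0 <= Num.max u u^-1 by apply: le_trans max_ge1.
split; first by rewrite /a -sqrtr1 ler_sqrt.
rewrite /a sqr_sqrtr //.
by have [_|_] := leP u u^-1; [right; rewrite invrK | left].
Qed.

Lemma odist_law_le_Phi (R : rcfType) (u v t : R) : 0 < u -> 0 < v -> 0 < t ->
  odist_law u v t <= Phi (Num.max u u^-1) (Num.max v v^-1).
Proof.
move=> u_gt0 v_gt0 t_gt0.
have [a_ge1 hu] := sqrt_max_inv u_gt0; have [b_ge1 hv] := sqrt_max_inv v_gt0.
rewrite /Phi sqrtrM; first exact: odist_law_le_envelope.
by rewrite le_max ltW.
Qed.

Lemma mulmx2E (R : pzSemiRingType) (A B : 'M[R]_2) i j :
  (A *m B) i j = A i 0 * B 0 j + A i 1 * B 1 j.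
Proof.
rewrite mxE !big_ord_recl big_ord0 addr0.
by congr (_ * _ + _ * _); congr (_ _ _); apply: val_inj.
Qed.

Section TwoByTwo.
Variable R : realFieldType.
Implicit Types A B M : 'M[R]_2.

Lemma odist_gt0 M : pos_mx M -> 0 < odist M.
Proof. by move=> hM; rewrite divr_gt0 // mulr_gt0. Qed.

Lemma odist_mulmx A B : pos_mx A -> pos_mx B ->
  odist (A *m B) =
  odist_law (odist A) (odist B) (A 0 1 * B 1 0 / (A 0 0 * B 0 0)).
Proof.
move=> hA hB; rewrite /odist /odist_law !mulmx2E.
field; rewrite !gt_eqF //.
all: by rewrite ?addr_gt0 ?mulr_gt0 ?divr_gt0 ?hA ?hB.
Qed.

Lemma pos_mx_xcol M : pos_mx M -> pos_mx (xcol 0 1 M).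
Proof. by move=> hM i j; rewrite mxE. Qed.

Lemma odist_xcol M : odist (xcol 0 1 M) = (odist M)^-1.
Proof. by rewrite /odist !mxE !tpermL !tpermR invf_div. Qed.

Lemma dist_xcol M : dist (xcol 0 1 M) = dist M.
Proof. by rewrite /dist odist_xcol invrK maxC. Qed.

End TwoByTwo.

Lemma odist_mulmx_le_Phi (R : rcfType) (A B : 'M[R]_2) :
  pos_mx A -> pos_mx B -> odist (A *m B) <= Phi (dist A) (dist B).
Proof.
move=> hA hB; rewrite odist_mulmx //.
by apply: odist_law_le_Phi; rewrite ?odist_gt0 // !divr_gt0 ?mulr_gt0.
Qed.

Theorem mainTheorem1 (R : rcfType) (A B : 'M[R]_2) :
  pos_mx A -> pos_mx B ->
  dist (A *m B) <= Phi (dist A) (dist B).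
Proof.
move=> hA hB; rewrite [dist _]/dist ge_max odist_mulmx_le_Phi //=.
have swap_cols : A *m xcol 0 1 B = xcol 0 1 (A *m B) by rewrite !xcolE mulmxA.
rewrite -odist_xcol -swap_cols -(dist_xcol B).
exact/odist_mulmx_le_Phi/pos_mx_xcol.
Qed.
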